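(* Let $H$ be a quasitriangular Hopf algebra with universal R-matrix $\mathcal R=\mathcal R^{[1]}\otimes\mathcal R^{[2]}\in H\otimes H$, and let $H^*$ be a Hopf algebra in nondegenerate duality with $H$ (e.g. $H$ finite-dimensional). Let $D(H)$, the covariant algebra $\underline{H^*}$, the actions and the map $Q$ be as defined in the context. Then $Q:\underline{H^*}\to H$ is a map of covariant algebras: it is an algebra homomorphism from $\underline{H^*}$ to $H$, and for all $h\in H$, $a,b\in H^*$, $$Q\big((h\otimes a)\triangleright b\big)=(h\otimes a)\triangleright Q(b),$$ where on the left the action of $D(H)$ on $\underline{H^*}$ is used and on the right the action of $D(H)$ on $H$ is used.
   Context: Notation: $\Delta h=h_{(1)}\otimes h_{(2)}$ (Sweedler notation, with further indices for iterated coproducts), $S$ the antipode, $\langle\ ,\ \rangle$ the pairing between $H$ and $H^*$. For $x,y\in H^*$ write $\mathcal R(x, y)=\langle x,\mathcal R^{[1]}\rangle\langle y,\mathcal R^{[2]}\rangle$. The quantum double $D(H)=H\bowtie H^{*\mathrm{op}}$ is the Hopf algebra built on $H\otimes H^*$ with the tensor product coproduct, the Hopf structure of $H$ and of $H^{*\mathrm{op}}$ (the opposite product of $H^*$) on the two factors, and product $$(h\otimes a)(g\otimes b)=hg_{(2)}\otimes b\,a_{(2)}\,\langle g_{(1)},a_{(1)}\rangle\langle Sg_{(3)},a_{(3)}\rangle,\qquad h,g\in H,\ a,b\in H^*,$$ where $b\,a_{(2)}$ is the product in $H^*$. $D(H)$ acts on the algebra $H$ by $(h\otimes a)\triangleright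 \phi=\langle \phi_{(1)},a\rangle\, h_{(1)}\phi_{(2)}Sh_{(2)}$ for $\phi\in H$ (coproduct of $H$). The algebra $\underline{H^*}$ is the vector space $H^*$ with the product $a\,\underline{\cdot}\,b=a_{(2)}b_{(2)}\,\mathcal R\big((Sa_{(1)})a_{(3)}, Sb_{(1)}\big)$, and $D(H)$ acts on it by $$(h\otimes a)\triangleright b=b_{(3)}\,\langle h,(Sb_{(2)})b_{(4)}\rangle\,\mathcal R(a_{(1)},b_{(1)})\,\mathcal R(b_{(5)},a_{(2)}).$$ Let $\mathcal Q=\mathcal R_{21}\mathcal R=\mathcal Q^{[1]}\otimes\mathcal Q^{[2]}\in H\otimes H$ and define $Q:H^*\to H$ by $Q(a)=\langle a,\mathcal Q^{[1]}\rangle\mathcal Q^{[2]}$. A covariant system means a Hopf algebra acting on an algebra $A$ with $h\triangleright(ab)=(h_{(1)}\triangleright a)(h_{(2)}\triangleright b)$ and $h\triangleright 1=\epsilon(h)1$. *)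

(* Tensors V (x) W are represented by finite lists of pure tensors
   (Sweedler-style finite sums); two such lists denote the same tensor iff
   they agree under all pairs of linear functionals (which is exactly equality
   in V (x) W over a field). *)
From HB Require Import structures.
From mathcomp Require Import all_boot all_order all_algebra.
Set Implicit Arguments. Unset Strict Implicit. Unset Printing Implicit Defensive.
Import Order.TTheory GRing.Theory Num.Theory.
Local Open Scope ring_scope.

Section Defs.
Variable K : fieldType.

Definition lin_fun (V : lmodType K) (f : V -> K) : Prop :=
  forall (c : K) (x y : V), f (c *: x + y) = c * f x + f y.

Definition tens2_eq (V W : lmodType K) (t s : seq (V * W)) : Prop :=
  forall (f : V -> K) (g : W -> K), lin_fun f -> lin_fun g ->
    \sum_(p <- t) f p.1 * g p.2 = \sum_(p <- s) f p.1 * g p.2.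

Definition tens3_eq (U V W : lmodType K) (t s : seq (U * V * W)) : Prop :=
  forall (f : U -> K) (g : V -> K) (k : W -> K),
    lin_fun f -> lin_fun g -> lin_fun k ->
    \sum_(p <- t) f p.1.1 * g p.1.2 * k p.2 =
    \sum_(p <- s) f p.1.1 * g p.1.2 * k p.2.

Record hopf_data (A : algType K) := HopfData {
  cop : A -> seq (A * A);
  cou : A -> K;
  ant : A -> A }.

Definition is_hopf (A : algType K) (X : hopf_data A) : Prop :=
  let d := cop X in let e := cou X in let S := ant X in
  [/\
      [/\ (forall c x y, tens2_eq (d (c *: x + y))
                       ([seq (c *: p.1, p.2) | p <- d x] ++ d y)),
      (forall x y, tens2_eq (d (x * y))
                       [seq (p.1 * q.1, p.2 * q.2) | p <- d x, q <- d y]),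
      tens2_eq (d 1) [:: (1, 1)] &
      (forall x, tens3_eq [seq (q.1, q.2, p.2) | p <- d x, q <- d p.1]
                          [seq (p.1, q.1, q.2) | p <- d x, q <- d p.2])],
      [/\ (forall c x y, e (c *: x + y) = c * e x + e y),
          (forall x y, e (x * y) = e x * e y),
          e 1 = 1 &
          (forall x, \sum_(p <- d x) e p.1 *: p.2 = x /\
                     \sum_(p <- d x) e p.2 *: p.1 = x)] &
      [/\
      (forall c x y, S (c *: x + y) = c *: S x + S y),
      (forall x, \sum_(p <- d x) S p.1 * p.2 = e x *: 1) &
      (forall x, \sum_(p <- d x) p.1 * S p.2 = e x *: 1)]].

Definition is_dual_pairing (H Hs : algType K) (XH : hopf_data H)
    (XHs : hopf_data Hs) (pr : H -> Hs -> K) : Prop :=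
  [/\ (forall c x y a, pr (c *: x + y) a = c * pr x a + pr y a) /\
      (forall c x a b, pr x (c *: a + b) = c * pr x a + pr x b),
      (forall x y a, pr (x * y) a = \sum_(p <- cop XHs a) pr x p.1 * pr y p.2),
      (forall x a b, pr x (a * b) = \sum_(p <- cop XH x) pr p.1 a * pr p.2 b),
      (forall a, pr 1 a = cou XHs a) /\ (forall x, pr x 1 = cou XH x) &
      [/\ (forall x a, pr (ant XH x) a = pr x (ant XHs a)),
          (forall x, (forall a, pr x a = 0) -> x = 0) &
          (forall a, (forall x, pr x a = 0) -> a = 0)]].

(* R in H (x) H is a universal R-matrix (Majid's conventions) *)
Definition is_quasitriangular (H : algType K) (X : hopf_data H)
    (R : seq (H * H)) : Prop :=
  let d := cop X in
  [/\ exists Rinv : seq (H * H),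
        [/\ tens2_eq [seq (p.1 * q.1, p.2 * q.2) | p <- R, q <- Rinv] [:: (1, 1)],
            tens2_eq [seq (q.1 * p.1, q.2 * p.2) | p <- R, q <- Rinv] [:: (1, 1)] &
            forall x, tens2_eq [seq (p.2, p.1) | p <- d x]
              [seq (r.1 * ps.1.1 * ps.2.1, r.2 * ps.1.2 * ps.2.2)
                 | r <- R, ps <- [seq (p, s) | p <- d x, s <- Rinv]]],
      tens3_eq [seq (q.1, q.2, p.2) | p <- R, q <- d p.1]
               [seq (r.1, s.1, r.2 * s.2) | r <- R, s <- R] &
      tens3_eq [seq (p.1, q.1, q.2) | p <- R, q <- d p.2]
               [seq (r.1 * s.1, s.2, r.2) | r <- R, s <- R]].

(* iterated coproduct: iterc d n x lists the (n+1)-tuples x(1),...,x(n+1) *)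
Fixpoint iterc (A : Type) (d : A -> seq (A * A)) (n : nat) (x : A)
    : seq (seq A) :=
  match n with
  | 0 => [:: [:: x]]
  | n'.+1 => flatten [seq [seq p.1 :: l | l <- iterc d n' p.2] | p <- d x]
  end.

Section Ops.
Variables (H Hs : algType K) (XH : hopf_data H) (XHs : hopf_data Hs).
Variables (pr : H -> Hs -> K) (R : seq (H * H)).

Definition Rform (x y : Hs) : K := \sum_(r <- R) pr r.1 x * pr r.2 y.

(* product of the covariant algebra underline(H^* ):
   a . b = a(2) b(2) R((S a(1)) a(3), S b(1)) *)
Definition umul (a b : Hs) : Hs :=
  \sum_(l <- iterc (cop XHs) 2 a) \sum_(q <- cop XHs b)
     Rform (ant XHs l`_0 * l`_2) (ant XHs q.1) *: (l`_1 * q.2).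

(* action of h (x) a in D(H) on underline(H^* ):
   b(3) <h, (S b(2)) b(4)> R(a(1), b(1)) R(b(5), a(2)) *)
Definition act_Hs (h : H) (a b : Hs) : Hs :=
  \sum_(l <- iterc (cop XHs) 4 b) \sum_(m <- cop XHs a)
     (pr h (ant XHs l`_1 * l`_3) * Rform m.1 l`_0 * Rform l`_4 m.2) *: l`_2.

(* action of h (x) a in D(H) on H: <phi(1), a> h(1) phi(2) S h(2) *)
Definition act_H (h : H) (a : Hs) (phi : H) : H :=
  \sum_(p <- cop XH phi) \sum_(q <- cop XH h)
     pr p.1 a *: (q.1 * p.2 * ant XH q.2).

(* Q(a) = <a, Q^[1]> Q^[2] with Q = R21 R = R^[2] S^[1] (x) R^[1] S^[2] *)
Definition Qmap (a : Hs) : H :=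
  \sum_(r <- R) \sum_(s <- R) pr (r.2 * s.1) a *: (r.1 * s.2).

End Ops.
End Defs.

(* Everything is checked after pairing with Hs: by nondegeneracy, an identity
   in H holds as soon as it holds against every a : Hs.  The Hopf and
   quasitriangularity axioms are identities in H (x) H and H (x) H (x) H tested
   against all linear functionals, so they apply to every form
   (x, y) |-> sum_i <x, a_i> <y, b_i> coming from an element of Hs (x) Hs; such
   forms are stable under the operations that occur (multiplying by fixed
   elements inside the pairing, applying S, taking coproducts) because each of
   them has a transpose on Hs.  In this calculus one derives the standard facts
   (eps (x) id) R = (id (x) eps) R = 1, S(xy) = S(y) S(x), R^-1 = (S (x) id) R,
   (S (x) S) R = R and R Delta = Delta^op R, and from them the three properties
   of Q = R21 R that drive the proof: Q commutes with every Delta(h),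
   (id (x) Delta) Q = R21 Q13 R12, and the adjoint action of h on the second
   leg of Q equals the action S(h(1)) (-) h(2) on the first.  Multiplicativity
   and covariance of Q are then computations of <Q(-), c> with these
   identities. *)

From HB Require Import structures.
From mathcomp Require Import all_boot all_order all_algebra.
From mathcomp Require Import ring.
Set Implicit Arguments. Unset Strict Implicit. Unset Printing Implicit Defensive.
Import GRing.Theory.
Local Open Scope ring_scope.

Lemma big_iterc0 (A : Type) (V : nmodType) (cp : A -> seq (A * A)) x
    (F : seq A -> V) :
  \sum_(l <- iterc cp 0 x) F l = F [:: x].
Proof. by rewrite /= big_seq1. Qed.

Lemma big_itercS (A : Type) (V : nmodType) (cp : A -> seq (A * A)) n x
    (F : seq A -> V) :
  \sum_(l <- iterc cp n.+1 x) F l =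
  \sum_(p <- cp x) \sum_(l <- iterc cp n p.2) F (p.1 :: l).
Proof. by rewrite /= big_flatten big_map; apply: eq_bigr => p _; rewrite big_map. Qed.

Lemma exchange_big2 (V : nmodType) I J L M (A : seq I) (B : I -> seq J) (C : seq L)
    (E : L -> seq M) (F : I -> J -> L -> M -> V) :
  \sum_(a <- A) \sum_(b <- B a) \sum_(c <- C) \sum_(e <- E c) F a b c e =
  \sum_(c <- C) \sum_(e <- E c) \sum_(a <- A) \sum_(b <- B a) F a b c e.
Proof.
under eq_bigr do rewrite exchange_big.
rewrite exchange_big; apply: eq_bigr => c _.
under eq_bigr do rewrite exchange_big.
exact: exchange_big.
Qed.

Lemma exchange_big3 (V : nmodType) I J L (A : seq I) (B : seq J) (C : seq L)
    (F : I -> J -> L -> V) :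
  \sum_(a <- A) \sum_(b <- B) \sum_(c <- C) F a b c =
  \sum_(c <- C) \sum_(a <- A) \sum_(b <- B) F a b c.
Proof. by under eq_bigr do rewrite exchange_big; rewrite exchange_big. Qed.

Lemma exchange_big_dep3 (V : nmodType) I A B C (r : seq I) (ra : seq A)
    (rb : A -> seq B) (rc : A -> B -> seq C) (F : I -> A -> B -> C -> V) :
  \sum_(i <- r) \sum_(a <- ra) \sum_(b <- rb a) \sum_(c <- rc a b) F i a b c =
  \sum_(a <- ra) \sum_(b <- rb a) \sum_(c <- rc a b) \sum_(i <- r) F i a b c.
Proof.
rewrite exchange_big; apply: eq_bigr => a _.
by rewrite exchange_big; apply: eq_bigr => b _; rewrite exchange_big.
Qed.

Lemma mul_sumZ (R : comNzRingType) (A : algType R) I J (r1 : seq I) (r2 : seq J)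
    (c1 : I -> R) (c2 : J -> R) (X : I -> A) (Y : J -> A) :
  (\sum_(i <- r1) c1 i *: X i) * (\sum_(j <- r2) c2 j *: Y j) =
  \sum_(i <- r1) \sum_(j <- r2) (c1 i * c2 j) *: (X i * Y j).
Proof.
rewrite mulr_suml; apply: eq_bigr => i _; rewrite mulr_sumr; apply: eq_bigr => j _.
by rewrite -scalerAl -scalerAr scalerA.
Qed.

Section LinFun.
Variables (K : fieldType) (V : lmodType K) (f : V -> K).
Hypothesis f_lin : lin_fun f.

Lemma lin_fun0 : f 0 = 0.
Proof.
have h := f_lin 1 0 0; rewrite scale1r addr0 mul1r in h.
by apply: (addrI (f 0)); rewrite addr0 -h.
Qed.

Lemma lin_funZ c x : f (c *: x) = c * f x.
Proof. by rewrite -[c *: x]addr0 f_lin lin_fun0 addr0. Qed.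

Lemma lin_fun_sum I (r : seq I) (F : I -> V) :
  f (\sum_(i <- r) F i) = \sum_(i <- r) f (F i).
Proof.
elim: r => [|i r IH]; first by rewrite !big_nil lin_fun0.
by rewrite !big_cons -[F i]scale1r f_lin mul1r scale1r IH.
Qed.

End LinFun.

Section HopfPairing.
Variables (K : fieldType) (H Hs : algType K).
Variables (XH : hopf_data H) (XHs : hopf_data Hs) (pr : H -> Hs -> K).
Hypotheses (hH : is_hopf XH) (hP : is_dual_pairing XH XHs pr).

Local Notation d := (cop XH).
Local Notation e := (cou XH).
Local Notation S := (ant XH).
Local Notation ds := (cop XHs).

Lemma pr_linl a : lin_fun (pr^~ a).
Proof. by case: hP => [[h _]] _ _ _ _ c x y; rewrite h. Qed.

Lemma pr_linr x : lin_fun (pr x).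
Proof. by case: hP => [[_ h]] _ _ _ _ c a b; rewrite h. Qed.

Lemma prZl c x a : pr (c *: x) a = c * pr x a.
Proof. exact: (lin_funZ (pr_linl a)). Qed.

Lemma prZr c x a : pr x (c *: a) = c * pr x a.
Proof. exact: (lin_funZ (pr_linr x)). Qed.

Lemma pr_suml I (r : seq I) (F : I -> H) a :
  pr (\sum_(i <- r) F i) a = \sum_(i <- r) pr (F i) a.
Proof. exact: (lin_fun_sum (pr_linl a)). Qed.

Lemma pr_sumr I (r : seq I) (F : I -> Hs) x :
  pr x (\sum_(i <- r) F i) = \sum_(i <- r) pr x (F i).
Proof. exact: (lin_fun_sum (pr_linr x)). Qed.

Lemma prMl x y a : pr (x * y) a = \sum_(p <- ds a) pr x p.1 * pr y p.2.
Proof. by case: hP. Qed.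

Lemma prMr x a b : pr x (a * b) = \sum_(p <- d x) pr p.1 a * pr p.2 b.
Proof. by case: hP. Qed.

Lemma pr1r x : pr x 1 = e x.
Proof. by case: hP => _ _ _ []. Qed.

Lemma prSl x a : pr (S x) a = pr x (ant XHs a).
Proof. by case: hP => _ _ _ _ []. Qed.

Lemma pr_inj x y : (forall a, pr x a = pr y a) -> x = y.
Proof.
move=> xy; case: hP => _ _ _ _ [_ nd _]; apply/eqP; rewrite -subr_eq0; apply/eqP/nd => a.
by rewrite -scaleN1r addrC (pr_linl a) xy mulN1r addNr.
Qed.

Lemma pr_sum2Z I J (r1 : seq I) (r2 : seq J) (c : I -> J -> K) (X : I -> J -> H) a :
  pr (\sum_(i <- r1) \sum_(j <- r2) c i j *: X i j) a =
  \sum_(i <- r1) \sum_(j <- r2) c i j * pr (X i j) a.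
Proof.
by rewrite pr_suml; apply: eq_bigr => i _; rewrite pr_suml; apply: eq_bigr => j _; rewrite prZl.
Qed.

(** * Forms coming from Hs *)

Definition has_transpose (L : H -> H) :=
  exists L' : Hs -> Hs, forall x a, pr (L x) a = pr x (L' a).

Definition pr_form (f : H -> K) := exists a, forall x, f x = pr x a.

Definition pr_form2 (F : H -> H -> K) :=
  exists t : seq (Hs * Hs), forall x y, F x y = \sum_(q <- t) pr x q.1 * pr y q.2.

Definition pr_form3 (F : H -> H -> H -> K) :=
  exists t : seq (Hs * Hs * Hs), forall x y z,
    F x y z = \sum_(q <- t) pr x q.1.1 * pr y q.1.2 * pr z q.2.

Definition has_transpose2 (B : H -> H -> H) :=
  forall a, pr_form2 (fun x y => pr (B x y) a).

Lemma has_transpose_id : has_transpose id.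
Proof. by exists id. Qed.

Lemma has_transpose_mull A L : has_transpose L -> has_transpose (fun x => A * L x).
Proof.
case=> L' hL; exists (fun a => \sum_(p <- ds a) pr A p.1 *: L' p.2) => x a.
by rewrite prMl pr_sumr; apply: eq_bigr => p _; rewrite prZr hL.
Qed.

Lemma has_transpose_mulr B L : has_transpose L -> has_transpose (fun x => L x * B).
Proof.
case=> L' hL; exists (fun a => \sum_(p <- ds a) pr B p.2 *: L' p.1) => x a.
by rewrite prMl pr_sumr; apply: eq_bigr => p _; rewrite prZr hL mulrC.
Qed.

Lemma has_transpose_ant L : has_transpose L -> has_transpose (fun x => S (L x)).
Proof. by case=> L' hL; exists (fun a => L' (ant XHs a)) => x a; rewrite prSl hL. Qed.

Lemma pr_form_pr L a : has_transpose L -> pr_form (fun x => pr (L x) a).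
Proof. by case=> L' hL; exists (L' a). Qed.

Lemma pr_form_cou : pr_form e.
Proof. by exists 1 => x; rewrite pr1r. Qed.

Lemma pr_form_mulr c f : pr_form f -> pr_form (fun x => f x * c).
Proof. by case=> a fa; exists (c *: a) => x; rewrite prZr fa mulrC. Qed.

Lemma pr_form2_ext F G : F =2 G -> pr_form2 G -> pr_form2 F.
Proof. by move=> FG [t Gt]; exists t => x y; rewrite FG Gt. Qed.

Lemma pr_form2_sum I (r : seq I) (F : I -> H -> H -> K) :
  (forall i, pr_form2 (F i)) -> pr_form2 (fun x y => \sum_(i <- r) F i x y).
Proof.
move=> hF; elim: r => [|i r [t IH]]; first by exists [::] => x y; rewrite !big_nil.
case: (hF i) => t0 Fi; exists (t0 ++ t) => x y.
by rewrite big_cons big_cat Fi IH.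
Qed.

Lemma pr_form2_mul f g : pr_form f -> pr_form g -> pr_form2 (fun x y => f x * g y).
Proof. by case=> a fa [b gb]; exists [:: (a, b)] => x y; rewrite big_seq1 fa gb. Qed.

Lemma pr_form2_mulC f g : pr_form f -> pr_form g -> pr_form2 (fun x y => f y * g x).
Proof. by move=> hf hg; apply: pr_form2_ext (pr_form2_mul hg hf) => x y; rewrite mulrC. Qed.

Lemma pr_form2_mull c F : pr_form2 F -> pr_form2 (fun x y => c * F x y).
Proof.
case=> t Ft; exists [seq (c *: q.1, q.2) | q <- t] => x y.
by rewrite Ft big_map mulr_sumr; apply: eq_bigr => q _; rewrite prZr mulrA.
Qed.

Lemma pr_form2_mulr c F : pr_form2 F -> pr_form2 (fun x y => F x y * c).
Proof. by move=> /(pr_form2_mull c); apply: pr_form2_ext => x y; rewrite mulrC. Qed.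

Lemma pr_form2_pr B a : has_transpose2 B -> pr_form2 (fun x y => pr (B x y) a).
Proof. exact. Qed.

Lemma has_transpose2_mul L1 L2 :
  has_transpose L1 -> has_transpose L2 -> has_transpose2 (fun x y => L1 x * L2 y).
Proof.
move=> h1 h2 a; apply: pr_form2_ext (fun x y => prMl _ _ _) _.
by apply: pr_form2_sum => p; apply: pr_form2_mul; apply: pr_form_pr.
Qed.

Lemma has_transpose2_mulr C B : has_transpose2 B -> has_transpose2 (fun x y => B x y * C).
Proof.
move=> hB a; apply: pr_form2_ext (fun x y => prMl _ _ _) _.
by apply: pr_form2_sum => p; apply: pr_form2_mulr.
Qed.

Lemma pr_form3_ext F G :
  (forall x y z, F x y z = G x y z) -> pr_form3 G -> pr_form3 F.
Proof. by move=> FG [t Gt]; exists t => x y z; rewrite FG Gt. Qed.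

Lemma pr_form3_sum I (r : seq I) (F : I -> H -> H -> H -> K) :
  (forall i, pr_form3 (F i)) -> pr_form3 (fun x y z => \sum_(i <- r) F i x y z).
Proof.
move=> hF; elim: r => [|i r [t IH]]; first by exists [::] => x y z; rewrite !big_nil.
case: (hF i) => t0 Fi; exists (t0 ++ t) => x y z.
by rewrite big_cons big_cat Fi IH.
Qed.

Lemma pr_form3_mulC F G :
  pr_form3 (fun x y z => G x y z * F x y z) -> pr_form3 (fun x y z => F x y z * G x y z).
Proof. by apply: pr_form3_ext => x y z; rewrite mulrC. Qed.

Lemma pr_form3_mul12 F k : pr_form2 F -> pr_form k -> pr_form3 (fun x y z => F x y * k z).
Proof.
case=> t Ft [c kc]; exists [seq (q, c) | q <- t] => x y z.
by rewrite Ft kc big_map mulr_suml.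
Qed.

Lemma pr_form3_mul13 F g : pr_form2 F -> pr_form g -> pr_form3 (fun x y z => F x z * g y).
Proof.
case=> t Ft [b gb]; exists [seq (q.1, b, q.2) | q <- t] => x y z.
by rewrite Ft gb big_map mulr_suml; apply: eq_bigr => q _; rewrite mulrAC.
Qed.

Lemma pr_form3_mul23 F f : pr_form2 F -> pr_form f -> pr_form3 (fun x y z => F y z * f x).
Proof.
case=> t Ft [a fa]; exists [seq (a, q.1, q.2) | q <- t] => x y z.
by rewrite Ft fa big_map mulr_suml; apply: eq_bigr => q _; rewrite mulrC mulrA.
Qed.

Ltac transpose_tac := repeat first
  [ exact: has_transpose_id | apply: has_transpose_ant
  | apply: has_transpose_mulr | apply: has_transpose_mull ].

Ltac form_tac := repeat first
  [ exact: pr_form_cou | apply: pr_form_pr; transpose_tac | apply: pr_form_mulr ].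

Ltac form2_tac := repeat first
  [ apply: pr_form2_sum => ?
  | apply: pr_form2_mul; form_tac | apply: pr_form2_mulC; form_tac
  | apply: pr_form2_pr; repeat first
      [ apply: has_transpose2_mul; transpose_tac | apply: has_transpose2_mulr ]
  | apply: pr_form2_mulr ].

Ltac form3_tac := repeat first
  [ apply: pr_form3_sum => ?
  | apply: pr_form3_mul12; [form2_tac | form_tac]
  | apply: pr_form3_mul13; [form2_tac | form_tac]
  | apply: pr_form3_mul23; [form2_tac | form_tac]
  | apply: pr_form3_mulC; first
      [ apply: pr_form3_mul12; [form2_tac | form_tac]
      | apply: pr_form3_mul13; [form2_tac | form_tac]
      | apply: pr_form3_mul23; [form2_tac | form_tac] ] ].

Lemma pr_form3_prM L1 L2 L3 a :
  has_transpose L1 -> has_transpose L2 -> has_transpose L3 ->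
  pr_form3 (fun x y z => pr (L1 x * L2 y * L3 z) a).
Proof.
move=> h1 h2 h3; apply: pr_form3_ext (fun x y z => prMl _ _ _) _.
apply: pr_form3_sum => p; apply: pr_form3_mul12; last exact: pr_form_pr.
exact: has_transpose2_mul.
Qed.

Lemma pr_form_lin f : pr_form f -> lin_fun f.
Proof. by case=> a fa c x y; rewrite !fa pr_linl. Qed.

Lemma tens2_eq_form t s : tens2_eq t s -> forall F, pr_form2 F ->
  \sum_(p <- t) F p.1 p.2 = \sum_(p <- s) F p.1 p.2.
Proof.
move=> ts F [q Fq]; under eq_bigr do rewrite Fq; under [RHS]eq_bigr do rewrite Fq.
rewrite exchange_big [RHS]exchange_big; apply: eq_bigr => r _.
exact: (ts (pr^~ r.1) (pr^~ r.2) (pr_linl _) (pr_linl _)).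
Qed.

Lemma tens3_eq_form t s : tens3_eq t s -> forall F, pr_form3 F ->
  \sum_(p <- t) F p.1.1 p.1.2 p.2 = \sum_(p <- s) F p.1.1 p.1.2 p.2.
Proof.
move=> ts F [q Fq]; under eq_bigr do rewrite Fq; under [RHS]eq_bigr do rewrite Fq.
rewrite exchange_big [RHS]exchange_big; apply: eq_bigr => r _.
exact: (ts (pr^~ r.1.1) (pr^~ r.1.2) (pr^~ r.2) (pr_linl _) (pr_linl _) (pr_linl _)).
Qed.

Lemma couM x y : e (x * y) = e x * e y.
Proof. by case: hH => [_ [_ h _ _] _]. Qed.

Lemma cou1 : e 1 = 1.
Proof. by case: hH => [_ [_ _ h _] _]. Qed.

Lemma couZ c x : e (c *: x) = c * e x.
Proof. exact: (lin_funZ (pr_form_lin pr_form_cou)). Qed.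

Lemma cou_sum I (r : seq I) (X : I -> H) : e (\sum_(i <- r) X i) = \sum_(i <- r) e (X i).
Proof. exact: (lin_fun_sum (pr_form_lin pr_form_cou)). Qed.

Lemma cop_couL x : \sum_(p <- d x) e p.1 *: p.2 = x.
Proof. by case: hH => [_ [_ _ _ h] _]; case: (h x). Qed.

Lemma cop_couR x : \sum_(p <- d x) e p.2 *: p.1 = x.
Proof. by case: hH => [_ [_ _ _ h] _]; case: (h x). Qed.

Lemma cop_cou x : \sum_(p <- d x) e p.1 * e p.2 = e x.
Proof. by rewrite -[in RHS](cop_couL x) cou_sum; apply: eq_bigr => p _; rewrite couZ. Qed.

Lemma antipodeL x : \sum_(p <- d x) S p.1 * p.2 = e x *: 1.
Proof. by case: hH => [_ _ [_ h _]]. Qed.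

Lemma antipodeR x : \sum_(p <- d x) p.1 * S p.2 = e x *: 1.
Proof. by case: hH => [_ _ [_ _ h]]. Qed.

Lemma antZ c x : S (c *: x) = c *: S x.
Proof. by apply: pr_inj => a; rewrite prSl !prZl prSl. Qed.

Lemma ant_sum I (r : seq I) (X : I -> H) : S (\sum_(i <- r) X i) = \sum_(i <- r) S (X i).
Proof.
by apply: pr_inj => a; rewrite prSl !pr_suml; apply: eq_bigr => i _; rewrite prSl.
Qed.

Lemma pr_form_cop F : pr_form2 F -> pr_form (fun x => \sum_(u <- d x) F u.1 u.2).
Proof.
case=> t Ft; exists (\sum_(q <- t) q.1 * q.2) => x; rewrite pr_sumr.
under eq_bigr do rewrite Ft.
by rewrite exchange_big; apply: eq_bigr => q _; rewrite prMr.
Qed.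

Lemma cop_sum_form I (r : seq I) (X : I -> H) F : pr_form2 F ->
  \sum_(u <- d (\sum_(i <- r) X i)) F u.1 u.2 = \sum_(i <- r) \sum_(u <- d (X i)) F u.1 u.2.
Proof. by move=> /pr_form_cop/pr_form_lin/lin_fun_sum ->. Qed.

Lemma copZ_form c x F : pr_form2 F ->
  \sum_(u <- d (c *: x)) F u.1 u.2 = c * \sum_(u <- d x) F u.1 u.2.
Proof. by move=> /pr_form_cop/pr_form_lin/lin_funZ ->. Qed.

Lemma copM_form x y F : pr_form2 F ->
  \sum_(u <- d (x * y)) F u.1 u.2 =
  \sum_(p <- d x) \sum_(q <- d y) F (p.1 * q.1) (p.2 * q.2).
Proof.
by move=> hF; case: hH => [[_ h _ _] _ _]; rewrite (tens2_eq_form (h x y) hF) big_allpairs_dep.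
Qed.

Lemma copA_form x G : pr_form3 G ->
  \sum_(p <- d x) \sum_(q <- d p.1) G q.1 q.2 p.2 =
  \sum_(p <- d x) \sum_(q <- d p.2) G p.1 q.1 q.2.
Proof.
move=> hG; case: hH => [[_ _ _ h] _ _].
by have := tens3_eq_form (h x) hG; rewrite !big_allpairs_dep.
Qed.

Lemma copA_mul x L1 L2 L3 :
  has_transpose L1 -> has_transpose L2 -> has_transpose L3 ->
  \sum_(p <- d x) \sum_(q <- d p.1) L1 q.1 * L2 q.2 * L3 p.2 =
  \sum_(p <- d x) \sum_(q <- d p.2) L1 p.1 * L2 q.1 * L3 q.2.
Proof.
move=> h1 h2 h3; apply: pr_inj => a; rewrite !pr_suml.
under eq_bigr do rewrite pr_suml; under [RHS]eq_bigr do rewrite pr_suml.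
by apply: (@copA_form x (fun u v w => pr (L1 u * L2 v * L3 w) a)); apply: pr_form3_prM.
Qed.

Lemma copM_mul x y L1 L2 : has_transpose L1 -> has_transpose L2 ->
  \sum_(u <- d (x * y)) L1 u.1 * L2 u.2 =
  \sum_(p <- d x) \sum_(q <- d y) L1 (p.1 * q.1) * L2 (p.2 * q.2).
Proof.
move=> h1 h2; apply: pr_inj => a; rewrite !pr_suml; under [RHS]eq_bigr do rewrite pr_suml.
by apply: (@copM_form x y (fun u v => pr (L1 u * L2 v) a)); apply: has_transpose2_mul.
Qed.

Lemma tens2_eq_mul t s L1 L2 : tens2_eq t s -> has_transpose L1 -> has_transpose L2 ->
  \sum_(p <- t) L1 p.1 * L2 p.2 = \sum_(p <- s) L1 p.1 * L2 p.2.
Proof.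
move=> ts h1 h2; apply: pr_inj => a; rewrite !pr_suml.
exact: (tens2_eq_form ts (has_transpose2_mul h1 h2 a)).
Qed.

Lemma ant1 : S 1 = 1.
Proof.
case: hH => [[_ _ h _] _ _].
have := tens2_eq_mul h (has_transpose_ant has_transpose_id) has_transpose_id.
by rewrite big_seq1 /= antipodeL cou1 scale1r mulr1.
Qed.

Lemma antipodeR2 x y :
  \sum_(p <- d x) \sum_(q <- d y) p.1 * q.1 * S q.2 * S p.2 = (e x * e y) *: 1.
Proof.
transitivity (\sum_(p <- d x) e y *: (p.1 * S p.2)).
  apply: eq_bigr => p _; rewrite -big_distrl /=; under eq_bigr do rewrite -mulrA.
  by rewrite -big_distrr /= antipodeR -scalerAr mulr1 -scalerAl.
by rewrite -scaler_sumr antipodeR scalerA mulrC.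
Qed.

Lemma ant_mul x y : S (x * y) = S y * S x.
Proof.
(* S(xy) = S(x1 y1) x2 y2 S(y3) S(x3) = e(x1 y1) S(y2) S(x2) *)
have -> : S (x * y) = \sum_(p <- d x) \sum_(q <- d y)
    S (p.1 * q.1) * \sum_(p' <- d p.2) \sum_(q' <- d q.2) p'.1 * q'.1 * S q'.2 * S p'.2.
  rewrite -{1}(cop_couR x) -{1}(cop_couR y) mul_sumZ ant_sum; apply: eq_bigr => p _.
  by rewrite ant_sum; apply: eq_bigr => q _; rewrite antZ antipodeR2 -scalerAr mulr1.
transitivity (\sum_(q <- d y) \sum_(q' <- d q.2) \sum_(p <- d x) \sum_(p' <- d p.2)
   S (p.1 * q.1) * (p'.1 * q'.1 * S q'.2) * S p'.2).
  rewrite -exchange_big2; apply: eq_bigr => p _; under eq_bigr do rewrite mulr_sumr.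
  rewrite exchange_big; apply: eq_bigr => p' _; apply: eq_bigr => q _.
  by rewrite mulr_sumr; apply: eq_bigr => q' _; rewrite !mulrA.
transitivity (\sum_(q <- d y) \sum_(q' <- d q.2) \sum_(p <- d x) \sum_(p' <- d p.1)
   S (p'.1 * q.1) * (p'.2 * q'.1 * S q'.2) * S p.2).
  apply: eq_bigr => q _; apply: eq_bigr => q' _.
  by rewrite -(@copA_mul x (fun a => S (a * q.1)) (fun b => b * q'.1 * S q'.2) S); transpose_tac.
rewrite exchange_big2.
transitivity (\sum_(p <- d x) \sum_(p' <- d p.1) \sum_(q <- d y) \sum_(q' <- d q.1)
   S (p'.1 * q'.1) * p'.2 * q'.2 * (S q.2 * S p.2)).
  apply: eq_bigr => p _; apply: eq_bigr => p' _.
  transitivity (\sum_(q <- d y) \sum_(q' <- d q.2)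
     S (p'.1 * q.1) * p'.2 * q'.1 * (S q'.2 * S p.2)).
    by apply: eq_bigr => q _; apply: eq_bigr => q' _; rewrite !mulrA.
  by rewrite -(@copA_mul y (fun a => S (p'.1 * a) * p'.2) id (fun c => S c * S p.2));
    transpose_tac.
transitivity (\sum_(p <- d x) \sum_(q <- d y) (e p.1 * e q.1) *: (S q.2 * S p.2)).
  apply: eq_bigr => p _; rewrite exchange_big; apply: eq_bigr => q _.
  transitivity (\sum_(p' <- d p.1) \sum_(q' <- d q.1)
     S (p'.1 * q'.1) * (p'.2 * q'.2 * (S q.2 * S p.2))).
    by apply: eq_bigr => p' _; apply: eq_bigr => q' _; rewrite !mulrA.
  rewrite -(@copM_mul _ _ S (fun b => b * (S q.2 * S p.2))); [|transpose_tac..].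
  under eq_bigr do rewrite mulrA.
  by rewrite -mulr_suml antipodeL -scalerAl mul1r couM.
rewrite -[in RHS](cop_couL y) -[in RHS](cop_couL x) !ant_sum.
under [in RHS]eq_bigr do rewrite antZ; under [X in _ = _ * X]eq_bigr do rewrite antZ.
rewrite mul_sumZ exchange_big; apply: eq_bigr => q _; apply: eq_bigr => p _.
by rewrite mulrC.
Qed.

Definition form2_additive (P : (H -> H -> K) -> K) :=
  [/\ forall F G, F =2 G -> P F = P G, P (fun _ _ => 0) = 0 &
      forall F G, P (fun x y => F x y + G x y) = P F + P G].

Definition form3_additive (P : (H -> H -> H -> K) -> K) :=
  [/\ forall F G, (forall x y z, F x y z = G x y z) -> P F = P G,
      P (fun _ _ _ => 0) = 0 &
      forall F G, P (fun x y z => F x y z + G x y z) = P F + P G].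

Lemma pr_form2_lift P1 P2 : form2_additive P1 -> form2_additive P2 ->
  (forall a b, P1 (fun x y => pr x a * pr y b) = P2 (fun x y => pr x a * pr y b)) ->
  forall F, pr_form2 F -> P1 F = P2 F.
Proof.
case=> ext1 zero1 add1 [ext2 zero2 add2] pure F [t Ft].
rewrite (ext1 _ _ Ft) (ext2 _ _ Ft); elim: t {F Ft} => [|q t IH].
  have F0 x y : \sum_(p <- [::]) pr x p.1 * pr y p.2 = 0 by rewrite big_nil.
  by rewrite (ext1 _ _ F0) (ext2 _ _ F0) zero1 zero2.
have Fq x y : \sum_(p <- q :: t) pr x p.1 * pr y p.2 =
    pr x q.1 * pr y q.2 + \sum_(p <- t) pr x p.1 * pr y p.2 by rewrite big_cons.
by rewrite (ext1 _ _ Fq) (ext2 _ _ Fq) add1 add2 pure IH.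
Qed.

Lemma pr_form3_lift P1 P2 : form3_additive P1 -> form3_additive P2 ->
  (forall a b c, P1 (fun x y z => pr x a * pr y b * pr z c) =
                 P2 (fun x y z => pr x a * pr y b * pr z c)) ->
  forall F, pr_form3 F -> P1 F = P2 F.
Proof.
case=> ext1 zero1 add1 [ext2 zero2 add2] pure F [t Ft].
rewrite (ext1 _ _ Ft) (ext2 _ _ Ft); elim: t {F Ft} => [|q t IH].
  have F0 x y z : \sum_(p <- [::]) pr x p.1.1 * pr y p.1.2 * pr z p.2 = 0.
    by rewrite big_nil.
  by rewrite (ext1 _ _ F0) (ext2 _ _ F0) zero1 zero2.
have Fq x y z : \sum_(p <- q :: t) pr x p.1.1 * pr y p.1.2 * pr z p.2 =
    pr x q.1.1 * pr y q.1.2 * pr z q.2 +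
    \sum_(p <- t) pr x p.1.1 * pr y p.1.2 * pr z p.2 by rewrite big_cons.
by rewrite (ext1 _ _ Fq) (ext2 _ _ Fq) add1 add2 pure IH.
Qed.

Ltac form_additive_tac :=
  let F := fresh "F" in let G := fresh "G" in let FG := fresh "FG" in
  split=> [F G FG | | F G] /=;
  [ repeat (apply: eq_bigr => ? _); exact: FG
  | by repeat (apply: big1 => ? _)
  | repeat (rewrite -big_split; apply: eq_bigr => ? _); done ].

Ltac lift_form2 := apply: pr_form2_lift; [form_additive_tac | form_additive_tac |].
Ltac lift_form3 := apply: pr_form3_lift; [form_additive_tac | form_additive_tac |].

Lemma pr_iterc n (x : nat -> H) b :
  pr (\prod_(i < n.+1) x i) b = \sum_(l <- iterc ds n b) \prod_(i < n.+1) pr (x i) l`_i.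
Proof.
elim: n x b => [|n IH] x b.
  by rewrite big_iterc0 !big_ord1.
rewrite big_itercS big_ord_recl prMl; apply: eq_bigr => p _.
rewrite (eq_bigr (fun i : 'I_n.+1 => x i.+1)) => [|i _]; last by rewrite lift0.
rewrite (IH (fun i => x i.+1)) mulr_sumr; apply: eq_bigr => l _; rewrite [RHS]big_ord_recl.
by congr (_ * _); apply: eq_bigr => i _; rewrite lift0.
Qed.

(** * The universal R-matrix *)

Section Quasitriangular.
Variables (R Ri : seq (H * H)).
Hypothesis copR1 : tens3_eq [seq (q.1, q.2, p.2) | p <- R, q <- d p.1]
                            [seq (r.1, s.1, r.2 * s.2) | r <- R, s <- R].
Hypothesis copR2 : tens3_eq [seq (p.1, q.1, q.2) | p <- R, q <- d p.2]
                            [seq (r.1 * s.1, s.2, r.2) | r <- R, s <- R].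
Hypothesis mulRRinv :
  tens2_eq [seq (p.1 * q.1, p.2 * q.2) | p <- R, q <- Ri] [:: (1, 1)].
Hypothesis mulRinvR :
  tens2_eq [seq (q.1 * p.1, q.2 * p.2) | p <- R, q <- Ri] [:: (1, 1)].
Hypothesis cop_op : forall x, tens2_eq [seq (p.2, p.1) | p <- d x]
  [seq (r.1 * ps.1.1 * ps.2.1, r.2 * ps.1.2 * ps.2.2)
     | r <- R, ps <- [seq (p, s) | p <- d x, s <- Ri]].

Lemma copR1_form G : pr_form3 G ->
  \sum_(p <- R) \sum_(q <- d p.1) G q.1 q.2 p.2 =
  \sum_(r <- R) \sum_(s <- R) G r.1 s.1 (r.2 * s.2).
Proof. by move=> hG; have := tens3_eq_form copR1 hG; rewrite !big_allpairs_dep. Qed.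

Lemma copR2_form G : pr_form3 G ->
  \sum_(p <- R) \sum_(q <- d p.2) G p.1 q.1 q.2 =
  \sum_(r <- R) \sum_(s <- R) G (r.1 * s.1) s.2 r.2.
Proof. by move=> hG; have := tens3_eq_form copR2 hG; rewrite !big_allpairs_dep. Qed.

Lemma mulRRinv_form F : pr_form2 F ->
  \sum_(r <- R) \sum_(q <- Ri) F (r.1 * q.1) (r.2 * q.2) = F 1 1.
Proof. by move=> hF; have := tens2_eq_form mulRRinv hF; rewrite big_allpairs_dep big_seq1. Qed.

Lemma mulRinvR_form F : pr_form2 F ->
  \sum_(r <- R) \sum_(q <- Ri) F (q.1 * r.1) (q.2 * r.2) = F 1 1.
Proof. by move=> hF; have := tens2_eq_form mulRinvR hF; rewrite big_allpairs_dep big_seq1. Qed.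

Lemma cop_op_form x F : pr_form2 F ->
  \sum_(p <- d x) F p.2 p.1 =
  \sum_(r <- R) \sum_(p <- d x) \sum_(q <- Ri) F (r.1 * p.1 * q.1) (r.2 * p.2 * q.2).
Proof.
move=> hF; have := tens2_eq_form (cop_op x) hF; rewrite big_map big_allpairs_dep => ->.
by apply: eq_bigr => r _; rewrite big_allpairs_dep.
Qed.

Lemma couR1 : \sum_(r <- R) e r.1 *: r.2 = 1.
Proof.
set u := \sum_(r <- R) _.
have uu : u * u = u.
  apply: pr_inj => c; rewrite mul_sumZ pr_suml.
  transitivity (\sum_(r <- R) \sum_(s <- R) e r.1 * e s.1 * pr (r.2 * s.2) c).
    by apply: eq_bigr => r _; rewrite pr_suml; apply: eq_bigr => s _; rewrite prZl.
  rewrite -(@copR1_form (fun x y z => e x * e y * pr z c)) /=; last by form3_tac.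
  by rewrite pr_suml; apply: eq_bigr => r _; rewrite -big_distrl /= cop_cou prZl.
set u' := \sum_(q <- Ri) e q.1 *: q.2.
have uu' : u * u' = 1.
  apply: pr_inj => c; rewrite mul_sumZ pr_suml.
  rewrite -[pr 1 c]mul1r -cou1 -(@mulRRinv_form (fun x y => e x * pr y c)); last by form2_tac.
  by apply: eq_bigr => r _; rewrite pr_suml; apply: eq_bigr => q _; rewrite prZl couM.
by rewrite -uu' -{1}[u]mulr1 -uu' mulrA uu.
Qed.

Lemma couR2 : \sum_(r <- R) e r.2 *: r.1 = 1.
Proof.
set v := \sum_(r <- R) _.
have vv : v * v = v.
  apply: pr_inj => c; rewrite mul_sumZ pr_suml.
  transitivity (\sum_(r <- R) \sum_(s <- R) pr (r.1 * s.1) c * e s.2 * e r.2).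
    apply: eq_bigr => r _; rewrite pr_suml; apply: eq_bigr => s _.
    by rewrite prZl mulrC [e _ * e _]mulrC mulrA.
  rewrite -(@copR2_form (fun x y z => pr x c * e y * e z)) /=; last by form3_tac.
  rewrite pr_suml; apply: eq_bigr => r _.
  by under eq_bigr do rewrite -mulrA; rewrite -big_distrr /= cop_cou prZl mulrC.
set v' := \sum_(q <- Ri) e q.2 *: q.1.
have vv' : v * v' = 1.
  apply: pr_inj => c; rewrite mul_sumZ pr_suml.
  rewrite -[pr 1 c]mulr1 -cou1 -(@mulRRinv_form (fun x y => pr x c * e y)); last by form2_tac.
  apply: eq_bigr => r _; rewrite pr_suml; apply: eq_bigr => q _.
  by rewrite prZl couM mulrC.
by rewrite -vv' -{1}[v]mulr1 -vv' mulrA vv.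
Qed.

Lemma mul_antR_R : forall F, pr_form2 F ->
  \sum_(r <- R) \sum_(s <- R) F (S r.1 * s.1) (r.2 * s.2) = F 1 1.
Proof.
lift_form2 => a b /=.
rewrite -(@copR1_form (fun x y z => pr (S x * y) a * pr z b)) /=; last by form3_tac.
transitivity (\sum_(p <- R) pr (e p.1 *: 1) a * pr p.2 b).
  by apply: eq_bigr => p _; rewrite -mulr_suml -pr_suml antipodeL.
rewrite -[in pr 1 b]couR1 pr_suml mulr_sumr; apply: eq_bigr => p _.
by rewrite !prZl mulrCA mulrA.
Qed.

Lemma Rinv_antR : forall F, pr_form2 F ->
  \sum_(r <- R) F (S r.1) r.2 = \sum_(q <- Ri) F q.1 q.2.
Proof.
lift_form2 => a b /=.
transitivity (\sum_(r <- R) \sum_(s <- R) \sum_(q <- Ri)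
    pr (S r.1 * (s.1 * q.1)) a * pr (r.2 * (s.2 * q.2)) b).
  apply: eq_bigr => r _.
  rewrite (@mulRRinv_form (fun x y => pr (S r.1 * x) a * pr (r.2 * y) b)) /=; last by form2_tac.
  by rewrite !mulr1.
rewrite exchange_big3; apply: eq_bigr => q _.
pose F x y := pr (x * q.1) a * pr (y * q.2) b.
transitivity (F 1 1); last by rewrite /F !mul1r.
rewrite -(@mul_antR_R F); last by rewrite /F; form2_tac.
by do 2!apply: eq_bigr => ? _; rewrite /F !mulrA.
Qed.

Lemma mul_antantR_Rinv : forall F, pr_form2 F ->
  \sum_(r <- R) \sum_(q <- Ri) F (S r.1 * q.1) (S r.2 * q.2) = F 1 1.
Proof.
lift_form2 => a b /=.
transitivity (\sum_(r <- R) \sum_(s <- R) pr (S (s.1 * r.1)) a * pr (S r.2 * s.2) b).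
  apply: eq_bigr => r _.
  rewrite -(@Rinv_antR (fun x y => pr (S r.1 * x) a * pr (S r.2 * y) b)) /=; last by form2_tac.
  by apply: eq_bigr => s _; rewrite ant_mul.
rewrite exchange_big -(@copR2_form (fun x y z => pr (S x) a * pr (S y * z) b)) /=;
  last by form3_tac.
transitivity (\sum_(p <- R) pr (S p.1) a * pr (e p.2 *: 1) b).
  by apply: eq_bigr => p _; rewrite -mulr_sumr -pr_suml antipodeL.
rewrite -ant1 -[in pr (S 1) a]couR2 ant_sum pr_suml mulr_suml; apply: eq_bigr => p _.
by rewrite antZ !prZl ant1 mulrCA mulrA.
Qed.

Lemma antantR : forall F, pr_form2 F ->
  \sum_(r <- R) F (S r.1) (S r.2) = \sum_(r <- R) F r.1 r.2.
Proof.
lift_form2 => a b /=.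
transitivity (\sum_(r <- R) \sum_(t <- R) \sum_(q <- Ri)
    pr (S r.1 * (q.1 * t.1)) a * pr (S r.2 * (q.2 * t.2)) b).
  apply: eq_bigr => r _.
  rewrite (@mulRinvR_form (fun x y => pr (S r.1 * x) a * pr (S r.2 * y) b)) /=; last by form2_tac.
  by rewrite !mulr1.
rewrite exchange_big; apply: eq_bigr => t _.
pose F x y := pr (x * t.1) a * pr (y * t.2) b.
transitivity (F 1 1); last by rewrite /F !mul1r.
rewrite -(@mul_antantR_Rinv F); last by rewrite /F; form2_tac.
by do 2!apply: eq_bigr => ? _; rewrite /F !mulrA.
Qed.

Lemma R_cop x : forall F, pr_form2 F ->
  \sum_(r <- R) \sum_(p <- d x) F (r.1 * p.1) (r.2 * p.2) =
  \sum_(r <- R) \sum_(p <- d x) F (p.2 * r.1) (p.1 * r.2).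
Proof.
lift_form2 => a b /=; symmetry.
transitivity (\sum_(r <- R) \sum_(r' <- R) \sum_(p <- d x) \sum_(q <- Ri)
    pr (r'.1 * p.1 * (q.1 * r.1)) a * pr (r'.2 * p.2 * (q.2 * r.2)) b).
  apply: eq_bigr => r _.
  rewrite (@cop_op_form x (fun u v => pr (u * r.1) a * pr (v * r.2) b)) /=; last by form2_tac.
  by do 3!apply: eq_bigr => ? _; rewrite !mulrA.
rewrite exchange_big; apply: eq_bigr => r' _; rewrite exchange_big; apply: eq_bigr => p _.
pose F u v := pr (r'.1 * p.1 * u) a * pr (r'.2 * p.2 * v) b.
transitivity (F 1 1); last by rewrite /F !mulr1.
by rewrite -(@mulRinvR_form F) //; rewrite /F; form2_tac.
Qed.

Lemma mulR_antR_op : forall F, pr_form2 F ->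
  \sum_(r <- R) \sum_(t <- R) F (r.1 * t.1) (S t.2 * r.2) = F 1 1.
Proof.
lift_form2 => a b /=.
rewrite -(@copR2_form (fun x y z => pr x a * pr (S y * z) b)) /=; last by form3_tac.
transitivity (\sum_(p <- R) pr p.1 a * pr (e p.2 *: 1) b).
  by apply: eq_bigr => p _; rewrite -mulr_sumr -pr_suml antipodeL.
rewrite -[in pr 1 a]couR2 pr_suml mulr_suml; apply: eq_bigr => p _.
by rewrite !prZl mulrCA mulrA.
Qed.

(** * The element Q = R21 R *)

Lemma Q_cop_comm x : forall F, pr_form2 F ->
  \sum_(p <- d x) \sum_(r <- R) \sum_(s <- R) F (r.2 * s.1 * p.1) (r.1 * s.2 * p.2) =
  \sum_(p <- d x) \sum_(r <- R) \sum_(s <- R) F (p.1 * (r.2 * s.1)) (p.2 * (r.1 * s.2)).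
Proof.
lift_form2 => a b /=.
transitivity (\sum_(r <- R) \sum_(s <- R) \sum_(p <- d x)
    pr (r.2 * (s.1 * p.1)) a * pr (r.1 * (s.2 * p.2)) b).
  by rewrite [RHS]exchange_big3; do 3!apply: eq_bigr => ? _; rewrite !mulrA.
transitivity (\sum_(r <- R) \sum_(s <- R) \sum_(p <- d x)
    pr (r.2 * (p.2 * s.1)) a * pr (r.1 * (p.1 * s.2)) b).
  apply: eq_bigr => r _.
  by rewrite (@R_cop x (fun u v => pr (r.2 * u) a * pr (r.1 * v) b)) //; form2_tac.
rewrite exchange_big.
transitivity (\sum_(s <- R) \sum_(r <- R) \sum_(p <- d x)
    pr (p.1 * r.2 * s.1) a * pr (p.2 * r.1 * s.2) b).
  apply: eq_bigr => s _.
  pose F u v := pr (v * s.1) a * pr (u * s.2) b.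
  transitivity (\sum_(r <- R) \sum_(p <- d x) F (r.1 * p.1) (r.2 * p.2)).
    by do 2!apply: eq_bigr => ? _; rewrite /F !mulrA.
  by rewrite (@R_cop x F) //; rewrite /F; form2_tac.
rewrite exchange_big3; apply: eq_bigr => p _; rewrite exchange_big.
by do 2!apply: eq_bigr => ? _; rewrite !mulrA.
Qed.

(* The two halves meet at sum S(h1) Q1 h2 (x) Q2 h3 S(h4): the first one uses
   that Q commutes with Delta, the second one the antipode axiom. *)
Lemma Q_ad_transpose_l h a b :
  \sum_(t <- d h) \sum_(r <- R) \sum_(s <- R)
    pr (r.2 * s.1) a * pr (t.1 * (r.1 * s.2) * S t.2) b =
  \sum_(t <- d h) \sum_(u <- d t.1) \sum_(k <- d u.1) \sum_(r <- R) \sum_(s <- R)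
    pr (S k.1 * (r.2 * s.1) * k.2) a * pr (r.1 * s.2 * u.2 * S t.2) b.
Proof.
transitivity (\sum_(t <- d h) \sum_(u <- d t.1) \sum_(k <- d u.1) \sum_(r <- R) \sum_(s <- R)
    pr (S k.1 * k.2 * (r.2 * s.1)) a * pr (u.2 * (r.1 * s.2) * S t.2) b).
  apply: eq_bigr => t _; rewrite exchange_big2; apply: eq_bigr => r _; apply: eq_bigr => s _.
  under eq_bigr => u _ do
    rewrite -mulr_suml -pr_suml -mulr_suml antipodeL -scalerAl mul1r prZl.
  rewrite -{1}(cop_couL t.1) !mulr_suml pr_suml mulr_sumr; apply: eq_bigr => u _.
  by rewrite -!scalerAl prZl mulrCA mulrA.
transitivity (\sum_(t <- d h) \sum_(u <- d t.1) \sum_(m <- d u.2) \sum_(r <- R) \sum_(s <- R)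
    pr (S u.1 * (m.1 * (r.2 * s.1))) a * pr (m.2 * (r.1 * s.2) * S t.2) b).
  apply: eq_bigr => t _.
  rewrite -(@copA_form t.1 (fun x y z => \sum_(r <- R) \sum_(s <- R)
    pr (S x * (y * (r.2 * s.1))) a * pr (z * (r.1 * s.2) * S t.2) b)); last by form3_tac.
  by do ![apply: eq_bigr => ? _]; rewrite !mulrA.
transitivity (\sum_(t <- d h) \sum_(u <- d t.1) \sum_(m <- d u.2) \sum_(r <- R) \sum_(s <- R)
    pr (S u.1 * (r.2 * s.1 * m.1)) a * pr (r.1 * s.2 * m.2 * S t.2) b).
  apply: eq_bigr => t _; apply: eq_bigr => u _.
  by rewrite (@Q_cop_comm u.2 (fun x y => pr (S u.1 * x) a * pr (y * S t.2) b)) //; form2_tac.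
apply: eq_bigr => t _.
rewrite (@copA_form t.1 (fun x y z => \sum_(r <- R) \sum_(s <- R)
  pr (S x * (r.2 * s.1) * y) a * pr (r.1 * s.2 * z * S t.2) b)); last by form3_tac.
by do ![apply: eq_bigr => ? _]; rewrite !mulrA.
Qed.

Lemma Q_ad_transpose_r h a b :
  \sum_(t <- d h) \sum_(u <- d t.1) \sum_(k <- d u.1) \sum_(r <- R) \sum_(s <- R)
    pr (S k.1 * (r.2 * s.1) * k.2) a * pr (r.1 * s.2 * u.2 * S t.2) b =
  \sum_(t <- d h) \sum_(r <- R) \sum_(s <- R)
    pr (S t.1 * (r.2 * s.1) * t.2) a * pr (r.1 * s.2) b.
Proof.
pose F x y := \sum_(r <- R) \sum_(s <- R) pr (S x * (r.2 * s.1) * y) a * pr (r.1 * s.2) b.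
have hF : pr_form2 F by rewrite /F; form2_tac.
have hG : pr_form3 (fun x y z => \sum_(k <- d x) \sum_(r <- R) \sum_(s <- R)
    pr (S k.1 * (r.2 * s.1) * k.2) a * pr (r.1 * s.2 * y * S z) b).
  apply: (@pr_form3_ext _ (fun x y z => \sum_(r <- R) \sum_(s <- R)
    (\sum_(k <- d x) pr (S k.1 * (r.2 * s.1) * k.2) a) * pr (r.1 * s.2 * y * S z) b)).
    move=> x y z; under [RHS]eq_bigr do under eq_bigr do rewrite big_distrl.
    by rewrite [RHS]exchange_big3.
  apply: pr_form3_sum => r; apply: pr_form3_sum => s; apply: pr_form3_mulC.
  apply: pr_form3_mul23; first by form2_tac.
  by apply: (pr_form_cop (F := fun u v => pr (S u * (r.2 * s.1) * v) a)); form2_tac.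
rewrite (copA_form h hG).
transitivity (\sum_(t <- d h) e t.2 * \sum_(k <- d t.1) F k.1 k.2).
  apply: eq_bigr => t _; rewrite exchange_big mulr_sumr; apply: eq_bigr => k _.
  rewrite exchange_big mulr_sumr; apply: eq_bigr => r _.
  rewrite exchange_big mulr_sumr; apply: eq_bigr => s _.
  under eq_bigr => v _ do rewrite -[r.1 * s.2 * v.1 * S v.2]mulrA.
  by rewrite -mulr_sumr -pr_suml -mulr_sumr antipodeR -scalerAr mulr1 prZl mulrCA.
rewrite -[in RHS](cop_couR h) (@cop_sum_form _ _ _ F) //.
by apply: eq_bigr => t _; rewrite copZ_form.
Qed.

Lemma Q_ad_transpose h : forall F, pr_form2 F ->
  \sum_(t <- d h) \sum_(r <- R) \sum_(s <- R) F (r.2 * s.1) (t.1 * (r.1 * s.2) * S t.2) =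
  \sum_(t <- d h) \sum_(r <- R) \sum_(s <- R) F (S t.1 * (r.2 * s.1) * t.2) (r.1 * s.2).
Proof. by lift_form2 => a b /=; rewrite Q_ad_transpose_l Q_ad_transpose_r. Qed.

Lemma cop2_Q : forall F, pr_form3 F ->
  \sum_(r <- R) \sum_(s <- R) \sum_(t <- R) \sum_(t' <- R)
    F (t.2 * r.2 * s.1 * t'.1) (t.1 * t'.2) (r.1 * s.2) =
  \sum_(r <- R) \sum_(s <- R) \sum_(f <- d r.1) \sum_(g <- d s.2)
    F (r.2 * s.1) (f.1 * g.1) (f.2 * g.2).
Proof.
lift_form3 => b a c /=; symmetry.
transitivity (\sum_(s <- R) \sum_(g <- d s.2) \sum_(t <- R) \sum_(r <- R)
    pr (t.2 * r.2 * s.1) b * pr (t.1 * g.1) a * pr (r.1 * g.2) c).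
  under eq_bigr do rewrite exchange_big.
  rewrite exchange_big2; apply: eq_bigr => s _; apply: eq_bigr => g _.
  rewrite (@copR1_form (fun x y z => pr (z * s.1) b * pr (x * g.1) a * pr (y * g.2) c)) //.
  by form3_tac.
rewrite exchange_big2.
transitivity (\sum_(t <- R) \sum_(r <- R) \sum_(s <- R) \sum_(t' <- R)
    pr (t.2 * r.2 * (s.1 * t'.1)) b * pr (t.1 * t'.2) a * pr (r.1 * s.2) c).
  apply: eq_bigr => t _; apply: eq_bigr => r _.
  rewrite (@copR2_form (fun x y z => pr (t.2 * r.2 * x) b * pr (t.1 * y) a * pr (r.1 * z) c)) //.
  by form3_tac.
rewrite exchange_big; apply: eq_bigr => r _; rewrite exchange_big; apply: eq_bigr => s _.
by do 2!apply: eq_bigr => ? _; rewrite !mulrA.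
Qed.

(** * The covariant algebra and the map Q *)

Lemma pr_umul y a b : pr y (umul XHs pr R a b) =
  \sum_(t <- R) \sum_(u <- d t.1) \sum_(v <- d y)
    pr (S u.1 * (v.1 * u.2)) a * pr (S t.2 * v.2) b.
Proof.
transitivity (\sum_(l <- iterc ds 2 a) \sum_(q <- ds b)
  \sum_(t <- R) \sum_(u <- d t.1) \sum_(v <- d y)
    pr (S u.1) l`_0 * pr v.1 l`_1 * pr u.2 l`_2 * (pr (S t.2) q.1 * pr v.2 q.2)).
  rewrite /umul pr_sumr; apply: eq_bigr => l _; rewrite pr_sumr; apply: eq_bigr => q _.
  rewrite prZr prMr /Rform mulr_suml; apply: eq_bigr => t _.
  rewrite prMr !mulr_suml; apply: eq_bigr => u _; rewrite mulr_sumr; apply: eq_bigr => v _.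
  by rewrite !prSl; ring.
under eq_bigr do rewrite exchange_big_dep3; rewrite exchange_big_dep3.
apply: eq_bigr => t _; apply: eq_bigr => u _; apply: eq_bigr => v _.
have -> : S u.1 * (v.1 * u.2) = \prod_(i < 3) [:: S u.1; v.1; u.2]`_i.
  by rewrite !big_ord_recl big_ord0 mulr1.
rewrite pr_iterc prMl big_distrl; apply: eq_bigr => l _.
rewrite big_distrr; apply: eq_bigr => q _.
by rewrite !big_ord_recl big_ord0 /= mulr1 !mulrA.
Qed.

Lemma pr_act_Hs y h a b : pr y (act_Hs XHs pr R h a b) =
  \sum_(k <- d h) \sum_(t <- R) \sum_(t' <- R)
    pr (t.2 * (S k.1 * (y * (k.2 * t'.1)))) b * pr (t.1 * t'.2) a.
Proof.
transitivity (\sum_(l <- iterc ds 4 b) \sum_(k <- d h) \sum_(t <- R) \sum_(t' <- R)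
    pr t.2 l`_0 * pr (S k.1) l`_1 * pr y l`_2 * pr k.2 l`_3 * pr t'.1 l`_4 *
    pr (t.1 * t'.2) a).
  rewrite /act_Hs pr_sumr; apply: eq_bigr => l _; rewrite pr_sumr.
  transitivity (\sum_(m <- ds a) \sum_(k <- d h) \sum_(t <- R) \sum_(t' <- R)
      pr t.2 l`_0 * pr (S k.1) l`_1 * pr y l`_2 * pr k.2 l`_3 * pr t'.1 l`_4 *
      (pr t.1 m.1 * pr t'.2 m.2)).
    apply: eq_bigr => m _.
    rewrite prZr prMr /Rform -!mulrA mulr_suml; apply: eq_bigr => k _.
    rewrite mulr_suml mulr_sumr; apply: eq_bigr => t _.
    rewrite mulr_suml !mulr_sumr; apply: eq_bigr => t' _.
    by rewrite prSl; ring.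
  rewrite exchange_big_dep3; do 3!apply: eq_bigr => ? _.
  by rewrite prMl mulr_sumr.
rewrite exchange_big_dep3; apply: eq_bigr => k _; apply: eq_bigr => t _.
apply: eq_bigr => t' _.
have -> : t.2 * (S k.1 * (y * (k.2 * t'.1))) =
    \prod_(i < 5) [:: t.2; S k.1; y; k.2; t'.1]`_i.
  by rewrite !big_ord_recl big_ord0 mulr1.
rewrite pr_iterc mulr_suml; apply: eq_bigr => l _.
by rewrite !big_ord_recl big_ord0 /= mulr1 !mulrA.
Qed.

Local Notation Q := (Qmap pr R).

Lemma pr_Qmap a c :
  pr (Q a) c = \sum_(r <- R) \sum_(s <- R) pr (r.2 * s.1) a * pr (r.1 * s.2) c.
Proof. exact: pr_sum2Z. Qed.

Lemma pr_Qmap_mul a b c : pr (Q a * Q b) c =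
  \sum_(z <- R) \sum_(y <- R) pr (z.2 * y.1) a *
    \sum_(r <- R) \sum_(s <- R) pr (r.2 * s.1) b * pr (z.1 * y.2 * r.1 * s.2) c.
Proof.
rewrite /Qmap mulr_suml pr_suml; apply: eq_bigr => z _.
rewrite mulr_suml pr_suml; apply: eq_bigr => y _.
rewrite mulr_sumr pr_suml mulr_sumr; apply: eq_bigr => r _.
rewrite [X in pr X c]mulr_sumr pr_suml mulr_sumr; apply: eq_bigr => s _.
by rewrite -scalerAl -scalerAr !prZl !mulrA.
Qed.

Lemma R21_ad_R X b c :
  \sum_(t <- R) \sum_(u <- d t.1) \sum_(x <- R) \sum_(w <- R)
    pr (S t.2 * x.2 * w.1) b * pr (x.1 * u.1 * X * S u.2 * w.2) c =
  \sum_(r <- R) \sum_(s <- R) pr (r.2 * s.1) b * pr (X * r.1 * s.2) c.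
Proof.
rewrite (@copR1_form (fun al be ga => \sum_(x <- R) \sum_(w <- R)
  pr (S ga * x.2 * w.1) b * pr (x.1 * al * X * S be * w.2) c)); last by form3_tac.
transitivity (\sum_(t' <- R) \sum_(w <- R) \sum_(x <- R) \sum_(t <- R)
    pr (S t'.2 * (S t.2 * x.2) * w.1) b * pr (x.1 * t.1 * X * S t'.1 * w.2) c).
  rewrite exchange_big; apply: eq_bigr => t' _.
  transitivity (\sum_(t <- R) \sum_(w <- R) \sum_(x <- R)
      pr (S t'.2 * (S t.2 * x.2) * w.1) b * pr (x.1 * t.1 * X * S t'.1 * w.2) c).
    apply: eq_bigr => t _; rewrite exchange_big; apply: eq_bigr => w _; apply: eq_bigr => x _.
    by rewrite ant_mul !mulrA.
  by rewrite exchange_big; apply: eq_bigr => w _; rewrite exchange_big.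
transitivity (\sum_(t' <- R) \sum_(w <- R) pr (S t'.2 * w.1) b * pr (X * S t'.1 * w.2) c).
  apply: eq_bigr => t' _; apply: eq_bigr => w _.
  rewrite (@mulR_antR_op (fun al be => pr (S t'.2 * be * w.1) b * pr (al * X * S t'.1 * w.2) c)).
    by rewrite /= mulr1 mul1r.
  by form2_tac.
rewrite exchange_big [RHS]exchange_big; apply: eq_bigr => w _.
by rewrite -(@antantR (fun al be => pr (be * w.1) b * pr (X * al * w.2) c)) //; form2_tac.
Qed.

Lemma Qmap_linear c a b : Q (c *: a + b) = c *: Q a + Q b.
Proof.
rewrite /Qmap scaler_sumr -big_split; apply: eq_bigr => r _.
rewrite scaler_sumr -big_split; apply: eq_bigr => s _.
by rewrite (pr_linr _) scalerDl scalerA.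
Qed.

Lemma Qmap1 : Q 1 = 1.
Proof.
have -> : (1 : H) = (\sum_(r <- R) e r.2 *: r.1) * (\sum_(s <- R) e s.1 *: s.2).
  by rewrite couR1 couR2 mulr1.
by rewrite mul_sumZ; do 2!apply: eq_bigr => ? _; rewrite pr1r couM.
Qed.

Lemma pr_Qmap_umul a b c : pr (Q (umul XHs pr R a b)) c =
  \sum_(t <- R) \sum_(x <- R) \sum_(w <- R) \sum_(u <- d t.1) \sum_(z <- R) \sum_(y <- R)
    pr (S u.1 * (z.2 * y.1) * u.2) a * pr (S t.2 * (x.2 * w.1)) b *
    pr (x.1 * (z.1 * y.2) * w.2) c.
Proof.
rewrite pr_Qmap.
transitivity (\sum_(s <- R) \sum_(t <- R) \sum_(u <- d t.1) \sum_(r <- R)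
    \sum_(f <- d r.2) \sum_(g <- d s.1)
    pr (S u.1 * (f.1 * g.1 * u.2)) a * pr (S t.2 * (f.2 * g.2)) b * pr (r.1 * s.2) c).
  rewrite exchange_big; apply: eq_bigr => s _.
  transitivity (\sum_(r <- R) \sum_(t <- R) \sum_(u <- d t.1)
      \sum_(f <- d r.2) \sum_(g <- d s.1)
      pr (S u.1 * (f.1 * g.1 * u.2)) a * pr (S t.2 * (f.2 * g.2)) b * pr (r.1 * s.2) c).
    apply: eq_bigr => r _; rewrite pr_umul mulr_suml; apply: eq_bigr => t _.
    rewrite mulr_suml; apply: eq_bigr => u _; rewrite mulr_suml.
    rewrite (@copM_form _ _ (fun v1 v2 =>
      pr (S u.1 * (v1 * u.2)) a * pr (S t.2 * v2) b * pr (r.1 * s.2) c)) //.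
    by form2_tac.
  by rewrite exchange_big; apply: eq_bigr => t _; rewrite exchange_big.
transitivity (\sum_(s <- R) \sum_(t <- R) \sum_(u <- d t.1) \sum_(x <- R) \sum_(z <- R)
    \sum_(g <- d s.1)
    pr (S u.1 * (z.2 * g.1 * u.2)) a * pr (S t.2 * (x.2 * g.2)) b * pr (x.1 * z.1 * s.2) c).
  apply: eq_bigr => s _; apply: eq_bigr => t _; apply: eq_bigr => u _.
  rewrite (@copR2_form (fun p q q' => \sum_(g <- d s.1)
    pr (S u.1 * (q * g.1 * u.2)) a * pr (S t.2 * (q' * g.2)) b * pr (p * s.2) c)) //.
  by form3_tac.
rewrite exchange_big_dep3.
transitivity (\sum_(t <- R) \sum_(u <- d t.1) \sum_(x <- R) \sum_(z <- R) \sum_(y <- R)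
    \sum_(w <- R)
    pr (S u.1 * (z.2 * y.1 * u.2)) a * pr (S t.2 * (x.2 * w.1)) b * pr (x.1 * z.1 * (y.2 * w.2)) c).
  apply: eq_bigr => t _; apply: eq_bigr => u _; apply: eq_bigr => x _.
  rewrite exchange_big; apply: eq_bigr => z _.
  rewrite (@copR1_form (fun al be ga => pr (S u.1 * (z.2 * al * u.2)) a *
    pr (S t.2 * (x.2 * be)) b * pr (x.1 * z.1 * ga) c)) //.
  by form3_tac.
apply: eq_bigr => t _; rewrite exchange_big; apply: eq_bigr => x _.
rewrite [RHS]exchange_big_dep3.
by do 4!apply: eq_bigr => ? _; rewrite !mulrA.
Qed.

Lemma Qmap_umul a b : Q (umul XHs pr R a b) = Q a * Q b.
Proof.
apply: pr_inj => c; rewrite pr_Qmap_umul pr_Qmap_mul.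
transitivity (\sum_(t <- R) \sum_(x <- R) \sum_(w <- R) \sum_(u <- d t.1) \sum_(z <- R)
    \sum_(y <- R) pr (z.2 * y.1) a * pr (S t.2 * (x.2 * w.1)) b *
    pr (x.1 * (u.1 * (z.1 * y.2) * S u.2) * w.2) c).
  apply: eq_bigr => t _; apply: eq_bigr => x _; apply: eq_bigr => w _.
  rewrite -(@Q_ad_transpose t.1 (fun al be =>
    pr al a * pr (S t.2 * (x.2 * w.1)) b * pr (x.1 * be * w.2) c)) //.
  by form2_tac.
under eq_bigr do rewrite exchange_big3.
under eq_bigr do under eq_bigr do rewrite exchange_big2.
rewrite exchange_big2; apply: eq_bigr => z _; apply: eq_bigr => y _.
rewrite -(R21_ad_R (z.1 * y.2)) mulr_sumr; apply: eq_bigr => t _.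
rewrite mulr_sumr; apply: eq_bigr => u _; rewrite mulr_sumr; apply: eq_bigr => x _.
by rewrite mulr_sumr; apply: eq_bigr => w _; rewrite !mulrA.
Qed.

Lemma pr_act_H_Qmap h a b c : pr (act_H XH pr h a (Q b)) c =
  \sum_(k <- d h) \sum_(r <- R) \sum_(s <- R) \sum_(f <- d r.1) \sum_(g <- d s.2)
    pr (r.2 * s.1) b * pr (f.1 * g.1) a * pr (k.1 * (f.2 * g.2) * S k.2) c.
Proof.
pose F x y := \sum_(k <- d h) pr x a * pr (k.1 * y * S k.2) c.
have hF : pr_form2 F by rewrite /F; form2_tac.
rewrite /act_H pr_sum2Z /Qmap (cop_sum_form _ _ hF) [RHS]exchange_big_dep3.
apply: eq_bigr => r _; rewrite (cop_sum_form _ _ hF); apply: eq_bigr => s _.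
rewrite (copZ_form _ _ hF) (copM_form _ _ hF) mulr_sumr; apply: eq_bigr => f _.
rewrite exchange_big mulr_sumr; apply: eq_bigr => g _.
by rewrite /F mulr_sumr; apply: eq_bigr => k _; rewrite !mulrA.
Qed.

Lemma Qmap_act h a b : Q (act_Hs XHs pr R h a b) = act_H XH pr h a (Q b).
Proof.
apply: pr_inj => c; rewrite pr_act_H_Qmap pr_Qmap.
transitivity (\sum_(k <- d h) \sum_(r <- R) \sum_(s <- R) \sum_(t <- R) \sum_(t' <- R)
    pr (t.2 * (S k.1 * (r.2 * s.1) * k.2) * t'.1) b * pr (t.1 * t'.2) a * pr (r.1 * s.2) c).
  rewrite -[RHS]exchange_big3; apply: eq_bigr => r _; apply: eq_bigr => s _.
  rewrite pr_act_Hs mulr_suml; apply: eq_bigr => k _.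
  rewrite mulr_suml; apply: eq_bigr => t _; rewrite mulr_suml; apply: eq_bigr => t' _.
  by rewrite !mulrA.
transitivity (\sum_(k <- d h) \sum_(r <- R) \sum_(s <- R) \sum_(t <- R) \sum_(t' <- R)
    pr (t.2 * (r.2 * s.1) * t'.1) b * pr (t.1 * t'.2) a * pr (k.1 * (r.1 * s.2) * S k.2) c).
  rewrite -(@Q_ad_transpose h (fun al be => \sum_(t <- R) \sum_(t' <- R)
    pr (t.2 * al * t'.1) b * pr (t.1 * t'.2) a * pr be c)) //.
  by form2_tac.
apply: eq_bigr => k _.
rewrite -(@cop2_Q (fun x y z => pr x b * pr y a * pr (k.1 * z * S k.2) c)) //; last by form3_tac.
by do 4!apply: eq_bigr => ? _; rewrite !mulrA.
Qed.

End Quasitriangular.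
End HopfPairing.

Theorem lemma2p1 (K : fieldType) (H Hs : algType K)
    (XH : hopf_data H) (XHs : hopf_data Hs)
    (pr : H -> Hs -> K) (R : seq (H * H)) :
  is_hopf XH -> is_hopf XHs -> is_dual_pairing XH XHs pr ->
  is_quasitriangular XH R ->
  [/\ (* Q is linear *)
      (forall (c : K) (a b : Hs), Qmap pr R (c *: a + b) = c *: Qmap pr R a + Qmap pr R b),
      (* Q is unital *)
      Qmap pr R 1 = 1,
      (* Q is multiplicative from underline(H^* ) to H *)
      (forall a b : Hs, Qmap pr R (umul XHs pr R a b) = Qmap pr R a * Qmap pr R b) &
      (* Q intertwines the D(H)-actions *)
      (forall (h : H) (a b : Hs),
         Qmap pr R (act_Hs XHs pr R h a b) = act_H XH pr h a (Qmap pr R b))].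
Proof.
move=> hH _ hP [[Ri [hRRi hRiR hRcop]] hR1 hR2].
split.
- exact (Qmap_linear hP R).
- exact (Qmap1 hH hP hR1 hR2 hRRi).
- exact (Qmap_umul hH hP hR1 hR2 hRRi hRiR hRcop).
- exact (Qmap_act hH hP hR1 hR2 hRiR hRcop).
Qed.
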